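(* Let $1\le r\le n$ and let $P_1,\dots,P_n$ be PRDS p-values satisfying the strong alternatives assumption: for every $\alpha>0$ and every $i$, $\sup_{\theta_i\in\Theta_{1i}}\Pr_{\theta_i}(P_i\le\alpha)=1$. Let $f(P_1,\dots,P_n)$ be a valid monotone p-value for $H_0^{r/n}$, and for $u\subset\{1,\dots,n\}$ with $|u|=n-r+1$ define $$g_u(\boldsymbol p_u)=\inf_{\boldsymbol p_{-u}\in(0,1]^{r-1}} f(p_1,\dots,p_n).$$ Then $g_u$ is a valid monotone meta-analysis p-value for $H_{0u}$.
   Context: Component hypotheses $H_{0i}:\theta_i\in\Theta_{0i}$ vs $H_{1i}:\theta_i\in\Theta_{1i}$ ($\Theta_i=\Theta_{0i}\cup\Theta_{1i}$ disjoint), $i=1,\dots,n$; $P_i$ has distribution $\Pr_{\theta_i}$ and each $P_i$ is valid: $\sup_{\theta_i\in\Theta_{0i}}\Pr_{\theta_i}(P_i\le\alpha)\le\alpha$ for all $\alpha\in[0,1]$. The joint law of $\boldsymbol P$ is $\Pr_\theta$, $\theta\in\prod_i\Theta_i$. PRDS means positively regression dependent in the sense of Benjamini and Yekutieli (2001) under every $\theta$; in particular $\Pr_\theta(P_1\le p_1,\dots,P_n\le p_n)\ge\prod_i\Pr_{\theta_i}(P_i\le p_i)$ for all $\boldsymbol p\in[0,1]^n$ and all $\theta$. For $u\subset\{1,\dots,n\}$, $-u$ is its complement, $\boldsymbol p_u=(p_j)_{j\in u}$, $H_{0u}$: $\theta_j\in\Theta_{0j}$ for all $j\in u$ (null space $\Theta_{0u}$).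 $H_0^{r/n}$: at most $r-1$ of the $H_{0i}$ are false, null space $\Theta_0^{r/n}$. A combined p-value $f$ is valid for $H_0^{r/n}$ if $\sup_{\theta\in\Theta_0^{r/n}}\Pr_\theta(f(\boldsymbol P)\le\alpha)\le\alpha$ for all $\alpha\in[0,1]$, and monotone if $f$ is non-decreasing in each argument; a meta-analysis p-value $g_u$ is valid for $H_{0u}$ if $\sup_{\theta_u\in\Theta_{0u}}\Pr_{\theta_u}(g_u(\boldsymbol P_u)\le\alpha)\le\alpha$ for all $\alpha$. *)

From HB Require Import structures.
From mathcomp Require Import all_boot all_order all_algebra.
From mathcomp Require Import all_classical all_reals all_analysis.
Set Implicit Arguments. Unset Strict Implicit. Unset Printing Implicit Defensive.
Import Order.TTheory GRing.Theory Num.Theory.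
Local Open Scope classical_set_scope.
Local Open Scope ring_scope.

Section Defs.
Variable R : realType.
Variable n : nat.

Definition prod_borel : set (set ('I_n -> R)) :=
  <<s [set (fun p : 'I_n -> R => p i) @^-1` B | i in [set: 'I_n] & B in
        [set B : set R | measurable B]] >>.

Definition borel_fun (f : ('I_n -> R) -> R) : Prop :=
  forall B : set R, measurable B -> prod_borel (f @^-1` B).

Definition in_cube (u : {set 'I_n}) (p : 'I_n -> R) : Prop :=
  forall i, i \in u -> 0 <= p i <= 1.

Definition monotone_on_cube {disp : Order.disp_t} {T : porderType disp}
  (u : {set 'I_n}) (f : ('I_n -> R) -> T) : Prop :=
  forall p q, in_cube u p -> in_cube u q ->
    (forall i, i \in u -> p i <= q i) -> (f p <= f q)%O.

Definition g_inf (u : {set 'I_n}) (f : ('I_n -> R) -> R) (p : 'I_n -> R) : \bar R :=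
  ereal_inf [set (f (fun i => if i \in u then p i else q i))%:E
            | q in [set q : 'I_n -> R | forall i, i \notin u -> 0 < q i <= 1]].

End Defs.

Section Model.
Variables (R : realType) (n : nat) (d : measure_display) (Omega : measurableType d)
  (T : Type) (Theta Theta0 : 'I_n -> set T)
  (Pr : ('I_n -> T) -> probability Omega R) (P : 'I_n -> Omega -> R).

Definition in_param (theta : 'I_n -> T) : Prop := forall i, Theta i (theta i).
Definition Theta1 (i : 'I_n) : set T := Theta i `\` Theta0 i.

Definition sigmaP (u : {set 'I_n}) : set (set Omega) :=
  <<s [set P j @^-1` B | j in [set j | j \in u] & B in
        [set B : set R | measurable B]] >>.

Definition marginals_consistent : Prop :=
  forall (u : {set 'I_n}) theta theta', in_param theta -> in_param theta' ->
    (forall i, i \in u -> theta i = theta' i) ->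
    forall A, sigmaP u A -> Pr theta A = Pr theta' A.

Definition components_valid : Prop :=
  forall i theta, in_param theta -> Theta0 i (theta i) ->
    forall alpha : R, 0 <= alpha <= 1 ->
      (Pr theta [set w | (P i w <= alpha)%R] <= alpha%:E)%E.

(* Consequence of PRDS recorded in the context (lower-orthant dependence) *)
Definition lower_orthant_dependent : Prop :=
  forall theta, in_param theta -> forall p : 'I_n -> R, (forall i, 0 <= p i <= 1) ->
    \prod_(i < n) fine (Pr theta [set w | P i w <= p i])
      <= fine (Pr theta [set w | forall i, P i w <= p i]).

Definition strong_alternatives : Prop :=
  forall (alpha : R), 0 < alpha -> forall i,
    ereal_sup [set Pr theta [set w | P i w <= alpha]
              | theta in [set theta | in_param theta /\ Theta1 i (theta i)]] = 1%E.

Definition in_null_rn (r : nat) (theta : 'I_n -> T) : Prop :=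
  in_param theta /\ exists s : {set 'I_n}, (#|s| <= r.-1)%N /\
     forall i, i \notin s -> Theta0 i (theta i).

Definition in_null_u (u : {set 'I_n}) (theta : 'I_n -> T) : Prop :=
  in_param theta /\ forall i, i \in u -> Theta0 i (theta i).

Definition valid_rn (r : nat) (f : ('I_n -> R) -> R) : Prop :=
  forall theta, in_null_rn r theta -> forall alpha : R, 0 <= alpha <= 1 ->
    (Pr theta [set w | (f (fun i => P i w) <= alpha)%R] <= alpha%:E)%E.

Definition valid_u (u : {set 'I_n}) (g : ('I_n -> R) -> \bar R) : Prop :=
  forall theta, in_null_u u theta -> forall alpha : R, 0 <= alpha <= 1 ->
    (Pr theta [set w | (g (fun i => P i w) <= alpha%:E)%E] <= alpha%:E)%E.

End Model.

From HB Require Import structures.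
From mathcomp Require Import all_boot all_order all_algebra.
From mathcomp Require Import all_classical all_reals all_analysis.
From mathcomp Require Import zify.
Set Implicit Arguments. Unset Strict Implicit. Unset Printing Implicit Defensive.
Import Order.TTheory GRing.Theory Num.Theory.
Local Open Scope classical_set_scope.
Local Open Scope ring_scope.

(** Fix [theta] in [Theta_0u] and [e] in (0,1]. By the strong alternatives
    assumption the parameters outside [u] can be moved to alternatives under
    which every [P_j], [j \notin u], is at most [e] except with arbitrarily
    small probability; the new parameter leaves the law of [P_u] unchanged and
    has at most [#|~: u| = r - 1] false nulls, so [f] is valid under it. On the
    event where all these [P_j] are at most [e], monotonicity gives
    [f P <= f (P_u, e)]; with a union bound,
    [Pr (f (P_u, e) < a) <= Pr (f P <= a) + small <= a + small].
    Letting [e] run through [1/(k+1)], continuity of the measure along the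
    increasing events and a countable description of [{g_u <= alpha}] give
    validity of [g_u]; its monotonicity is inherited from [f]. *)

Lemma measure_bigsetU_le d (T : ringOfSetsType d) (R : realFieldType)
    (mu : {measure set T -> \bar R}) (I : Type) (s : seq I) (Q : pred I)
    (F : I -> set T) :
  (forall i, Q i -> measurable (F i)) ->
  (mu (\big[setU/set0]_(i <- s | Q i) F i) <= \sum_(i <- s | Q i) mu (F i))%E.
Proof.
move=> mF; apply: proj2 (big_rec2 (fun A x => measurable A /\ (mu A <= x)%E) _ _).
  by rewrite measure0.
move=> i A x Qi [mA leAx]; split; first exact: measurableU (mF i Qi) mA.
by apply: le_trans (measureU2 _ (mF i Qi) mA) _; apply: leeD.
Qed.

Lemma exists_natSinv_lt (R : archiRealFieldType) (e : R) :
  0 < e -> exists k : nat, k.+1%:R^-1 < e.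
Proof.
move=> e0; have [k _ ke] := near_infty_natSinv_lt (PosNum e0).
by exists k; exact: ke (leqnn k).
Qed.

Lemma natSinv_in01 (R : numFieldType) (k : nat) : 0 <= (k.+1%:R^-1 : R) <= 1.
Proof. by rewrite invr_ge0 ler0n /= invf_le1 ?ltr0n // ler1n. Qed.

Definition fill (T : Type) (n : nat) (u : {set 'I_n}) (p q : 'I_n -> T) : 'I_n -> T :=
  fun i => if i \in u then p i else q i.

Lemma fill_id (T : Type) (n : nat) (u : {set 'I_n}) (p : 'I_n -> T) : fill u p p = p.
Proof. by apply/funext => i; rewrite /fill; case: ifP. Qed.

Lemma prod_borel_preimage (R : realType) (n : nat) (Omega : Type)
    (G : set (set Omega)) (h : Omega -> 'I_n -> R) :
  sigma_algebra setT G ->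
  (forall i (B : set R), measurable B -> G ((h^~ i) @^-1` B)) ->
  forall S, prod_borel S -> G (h @^-1` S).
Proof.
move=> [G0 GC GU] hG; apply: smallest_sub.
  split => /=; first by rewrite preimage_set0.
  - by move=> A GA; rewrite !setTD preimage_setC -setTD; apply: GC.
  - by move=> A GA; rewrite preimage_bigcup; apply: GU.
by move=> _ [i _ [B mB <-]]; exact: hG.
Qed.

Section coordinate_sigma_algebra.
Variables (R : realType) (n : nat) (d : measure_display) (Omega : measurableType d)
  (P : 'I_n -> Omega -> R).
Hypothesis mP : forall i, measurable_fun setT (P i).
Implicit Types (u : {set 'I_n}) (f : ('I_n -> R) -> R).

Lemma sigmaP_measurable u A : sigmaP P u A -> measurable A.
Proof.
apply: smallest_sub; first exact: sigma_algebra_measurable.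
by move=> _ [j _ [B mB <-]]; rewrite -[_ @^-1` _]setTI; exact: mP.
Qed.

Lemma measurable_vec_preimage S : prod_borel S -> measurable ((fun w i => P i w) @^-1` S).
Proof.
apply: prod_borel_preimage; first exact: sigma_algebra_measurable.
by move=> i B mB; rewrite -[_ @^-1` _]setTI; exact: mP.
Qed.

Lemma sigmaP_preimage u j (B : set R) :
  j \in u -> measurable B -> sigmaP P u (P j @^-1` B).
Proof. by move=> ju mB; apply: sub_sigma_algebra; exists j => //; exists B. Qed.

Lemma sigmaP_coord_le u j (e : R) : j \in u -> sigmaP P u [set w | P j w <= e].
Proof.
move=> ju; rewrite (_ : [set w | _] = P j @^-1` `]-oo, e]).
  exact: sigmaP_preimage ju (measurable_itv _).
by apply/seteqP; split => w /=; rewrite in_itv.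
Qed.

Lemma sigmaP_coord_gt u j (e : R) : j \in u -> sigmaP P u [set w | e < P j w].
Proof.
move=> ju; rewrite (_ : [set w | _] = P j @^-1` `]e, +oo[).
  exact: sigmaP_preimage ju (measurable_itv _).
by apply/seteqP; split => w /=; rewrite in_itv /= andbT.
Qed.

Lemma measurable_coord_le j (e : R) : measurable [set w | P j w <= e].
Proof. exact: sigmaP_measurable (sigmaP_coord_le e (set11 j)). Qed.

Lemma measurable_coord_gt j (e : R) : measurable [set w | e < P j w].
Proof. exact: sigmaP_measurable (sigmaP_coord_gt e (set11 j)). Qed.

Lemma sigmaP_fill u (c : 'I_n -> R) S :
  prod_borel S -> sigmaP P u ((fun w => fill u (P^~ w) c) @^-1` S).
Proof.
apply: prod_borel_preimage; first exact: smallest_sigma_algebra.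
move=> i B mB; rewrite /fill; case: (boolP (i \in u)) => iu /=.
  exact: sigmaP_preimage.
rewrite -[_ @^-1` _]/(cst (c i) @^-1` B) preimage_cst; case: ifP => _.
  by rewrite -(setD0 setT); apply: sigma_algebraCD; exact: sigma_algebra0.
exact: sigma_algebra0.
Qed.

Lemma sigmaP_fill_lt u f (c : 'I_n -> R) (a : R) :
  borel_fun f -> sigmaP P u [set w | f (fill u (P^~ w) c) < a].
Proof.
move=> bf; rewrite (_ : [set w | _] =
  (fun w => fill u (P^~ w) c) @^-1` (f @^-1` `]-oo, a[)).
  by apply: sigmaP_fill; apply: bf; exact: measurable_itv.
by apply/seteqP; split => w /=; rewrite in_itv.
Qed.

Lemma measurable_fill_lt u f (c : 'I_n -> R) (a : R) :
  borel_fun f -> measurable [set w | f (fill u (P^~ w) c) < a].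
Proof. by move=> bf; apply: sigmaP_measurable (sigmaP_fill_lt c a bf). Qed.

Lemma measurable_le_fun f (a : R) : borel_fun f -> measurable [set w | f (P^~ w) <= a].
Proof.
move=> bf; rewrite (_ : [set w | _] =
  (fun w i => P i w) @^-1` (f @^-1` `]-oo, a])).
  by apply: measurable_vec_preimage; apply: bf; exact: measurable_itv.
by apply/seteqP; split => w /=; rewrite in_itv.
Qed.

End coordinate_sigma_algebra.

Section infimum_over_complement.
Variables (R : realType) (n : nat) (u : {set 'I_n}) (f : ('I_n -> R) -> R).
Hypothesis mf : monotone_on_cube [set: 'I_n] f.

Lemma le_fill (p p' q q' : 'I_n -> R) :
  in_cube u p -> in_cube u p' ->
  (forall i, i \notin u -> 0 <= q i <= 1) -> (forall i, i \notin u -> 0 <= q' i <= 1) ->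
  (forall i, i \in u -> p i <= p' i) -> (forall i, i \notin u -> q i <= q' i) ->
  f (fill u p q) <= f (fill u p' q').
Proof.
move=> cp cp' cq cq' le_p le_q; apply: mf => i _; rewrite /fill.
- by case: ifPn => iu; [exact: cp | exact: cq].
- by case: ifPn => iu; [exact: cp' | exact: cq'].
- by case: ifPn => iu; [exact: le_p | exact: le_q].
Qed.

Lemma le_fill_cst (p : 'I_n -> R) (e : R) : (forall i, 0 <= p i <= 1) -> e <= 1 ->
  (forall j, j \notin u -> p j <= e) -> f p <= f (fill u p (cst e)).
Proof.
move=> p01 e1 pe; rewrite -{1}(fill_id u p); apply: le_fill => // i iu /=.
by rewrite e1 andbT; apply: le_trans (pe i iu); case/andP: (p01 i).
Qed.

Lemma g_inf_le_fill (p q : 'I_n -> R) : in_cube u p ->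
  (forall i, i \notin u -> 0 < q i <= 1) -> (g_inf u f p <= (f (fill u p q))%:E)%E.
Proof. by move=> cp qQ; apply: ge_ereal_inf; exists (f (fill u p q))%:E => //; exists q. Qed.

Lemma g_inf_monotone : monotone_on_cube u (g_inf u f).
Proof.
move=> p p' cp cp' lep; apply: le_ereal_inf_tmp => _ [q qQ <-].
have cq i : i \notin u -> 0 <= q i <= 1 by move/qQ => /andP[/ltW -> ->].
apply: le_trans (g_inf_le_fill cp qQ) _; rewrite lee_fin; exact: le_fill.
Qed.

Lemma g_inf_le_natSinvP (p : 'I_n -> R) (a : R) : in_cube u p ->
  (g_inf u f p <= a%:E)%E <->
  forall m, exists k, f (fill u p (cst k.+1%:R^-1)) < a + m.+1%:R^-1.
Proof.
move=> cp; split => [ga m | h].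
  have : (g_inf u f p < (a + m.+1%:R^-1)%:E)%E.
    by apply: le_lt_trans ga _; rewrite lte_fin ltrDl invr_gt0 ltr0n.
  case/ereal_inf_lt => _ [q qQ <-]; rewrite lte_fin => fq.
  have [k _ qk] : \forall k \near \oo, forall j, j \notin u -> k.+1%:R^-1 < q j.
    apply: filter_forall => j; case: (boolP (j \in u)) => ju; first exact: nearW.
    have /andP[qj0 _] := qQ j ju.
    by apply: filterS (near_infty_natSinv_lt (PosNum qj0)).
  exists k; apply: le_lt_trans fq; apply: le_fill => // i.
  - by move=> _; exact: natSinv_in01.
  - by move/qQ => /andP[/ltW -> ->].
  - by move=> iu; exact: ltW (qk k (leqnn k) i iu).
apply/lee_addgt0Pr => e e0; have [m me] := exists_natSinv_lt e0.
have [k fk] := h m.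
have natSinv_filler i : i \notin u -> 0 < cst (k.+1%:R^-1 : R) i <= 1.
  by move=> _; rewrite invr_gt0 ltr0n; case/andP: (natSinv_in01 R k).
apply: le_trans (g_inf_le_fill cp natSinv_filler) _.
by rewrite lee_fin; apply/ltW/(lt_le_trans fk); rewrite lerD2l ltW.
Qed.

End infimum_over_complement.

Section validity.
Variables (R : realType) (n r : nat) (d : measure_display) (Omega : measurableType d)
  (T : Type) (Theta Theta0 : 'I_n -> set T)
  (Pr : ('I_n -> T) -> probability Omega R) (P : 'I_n -> Omega -> R)
  (f : ('I_n -> R) -> R) (u : {set 'I_n}).
Hypotheses (r_range : (1 <= r <= n)%N) (mP : forall i, measurable_fun setT (P i))
  (P01 : forall i w, 0 <= P i w <= 1) (mc : marginals_consistent Theta Pr P)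
  (sa : strong_alternatives Theta Theta0 Pr P) (bf : borel_fun f)
  (vf : valid_rn Theta Theta0 Pr P r f) (mf : monotone_on_cube [set: 'I_n] f)
  (card_u : #|u| = (n - r).+1).

Lemma in_null_rn_patch theta th : in_null_u Theta Theta0 u theta ->
  (forall i, i \notin u -> Theta i (th i)) ->
  in_null_rn Theta Theta0 r (fun i => if i \in u then theta i else th i).
Proof.
move=> [theta_par theta_null] th_par; split.
  by move=> i; case: ifPn => iu; [exact: theta_par | exact: th_par].
exists (~: u); split.
  by have := cardsC u; rewrite card_ord card_u; case/andP: r_range => ? ?; lia.
by move=> i; rewrite inE negbK => iu; rewrite iu; exact: theta_null.
Qed.

Lemma exists_alternative_tail j (e eta : R) : 0 < e -> 0 < eta ->
  exists th, in_param Theta th /\ Theta1 Theta Theta0 j (th j) /\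
    (Pr th [set w | (e < P j w)%R] <= eta%:E)%E.
Proof.
move=> e0 eta0.
have : ((1 - eta)%:E < ereal_sup [set Pr th [set w | (P j w <= e)%R]
          | th in [set th | in_param Theta th /\ Theta1 Theta Theta0 j (th j)]])%E.
  by rewrite sa // lte_fin gtrBl.
case/ereal_sup_gt => _ [th [th_par th_alt] <-] large; exists th; do 2!split => //.
have mle : measurable [set w | P j w <= e] by exact: measurable_coord_le.
rewrite (_ : [set w | e < P j w] = ~` [set w | P j w <= e]); last first.
  by apply/seteqP; split => w /=; rewrite ltNge => /negP.
rewrite probability_setC // leeBlDr ?fin_num_measure // addeC.
by rewrite EFinB lteBlDr // in large; exact: ltW.
Qed.

Lemma exists_null_rn_patch theta (e eta : R) : in_null_u Theta Theta0 u theta ->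
  0 < e -> 0 < eta ->
  exists2 theta', in_null_rn Theta Theta0 r theta' /\
                  (forall i, i \in u -> theta i = theta' i)
    & forall j, j \notin u -> (Pr theta' [set w | (e < P j w)%R] <= eta%:E)%E.
Proof.
move=> null_theta e0 eta0.
have /choice [th alt] := fun j => exists_alternative_tail j e0 eta0.
pose theta' i := if i \in u then theta i else th i i.
have null' : in_null_rn Theta Theta0 r theta'.
  by apply: in_null_rn_patch => // i _; have [] := alt i.
exists theta'; first by split => // i iu; rewrite /theta' iu.
move=> j ju; have [th_par [_ small]] := alt j.
rewrite (@mc [set j]%SET theta' (th j) null'.1 th_par) //.
- by move=> i; rewrite inE => /eqP ->; rewrite /theta' (negbTE ju).
- exact: sigmaP_coord_gt e (set11 j).
Qed.

Lemma prob_fill_lt theta (a e : R) : in_null_u Theta Theta0 u theta ->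
  0 <= a -> 0 < e <= 1 ->
  (Pr theta [set w | (f (fill u (P^~ w) (cst e)) < a)%R] <= a%:E)%E.
Proof.
move=> null_theta a0 /andP[e0 e1]; set F := [set w | _].
have mF : measurable F by exact: measurable_fill_lt.
have [a1|a1] := leP 1 a.
  by apply: le_trans (probability_le1 _ mF) _; rewrite lee_fin.
apply/lee_addgt0Pr => eta eta0.
have eta'_gt0 : 0 < eta / n.+1%:R by rewrite divr_gt0 ?ltr0n.
have [theta' [null' eq_u] tail] := exists_null_rn_patch null_theta e0 eta'_gt0.
have -> : Pr theta F = Pr theta' F.
  by apply: (@mc u theta theta' null_theta.1 null'.1 eq_u); exact: sigmaP_fill_lt.
pose G := [set w | f (P^~ w) <= a].
pose U := \big[setU/set0]_(j | j \notin u) [set w | e < P j w].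
have mG : measurable G by exact: measurable_le_fun.
have mgt j : measurable [set w | e < P j w] by exact: measurable_coord_gt.
have mU : measurable U by apply: bigsetU_measurable => j _.
have FGU : F `<=` G `|` U.
  move=> w Fw; have [[j ju ejw]|small] := pselect (exists2 j, j \notin u & e < P j w).
    by right; rewrite /U (bigD1 j) //; left.
  left; apply: le_trans (ltW Fw); apply: le_fill_cst => // j ju.
  by rewrite leNgt; apply/negP => ?; apply: small; exists j.
apply: le_trans (le_measure _ (mem_set mF) (mem_set (measurableU _ _ mG mU)) FGU) _.
apply: le_trans (measureU2 _ mG mU) _; apply: leeD; first by apply: vf => //; rewrite a0 ltW.
apply: le_trans (measure_bigsetU_le _ _ (fun j _ => mgt j)) _.
apply: (@le_trans _ _ (\sum_(j | j \notin u) (eta / n.+1%:R)%:E)%E); first exact: lee_sum.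
rewrite sumEFin sumr_const lee_fin.
have card_le : (#|[pred j | j \notin u]| <= n.+1)%N.
  by apply: leq_trans (max_card _) _; rewrite card_ord.
apply: le_trans (ler_wpMn2l (ltW eta'_gt0) card_le) _.
by rewrite -[leLHS]mulr_natr divfK // pnatr_eq0.
Qed.

Lemma prob_bigcup_fill_lt theta (a : R) : in_null_u Theta Theta0 u theta -> 0 <= a ->
  (Pr theta (\bigcup_k [set w | (f (fill u (P^~ w) (cst k.+1%:R^-1)) < a)%R]) <= a%:E)%E.
Proof.
move=> null_theta a0; set F := fun k => [set w | _].
have mF k : measurable (F k) by exact: measurable_fill_lt.
have F_nd : nondecreasing_seq F.
  apply/nondecreasing_seqP => k; apply/subsetPset => w /=; apply: le_lt_trans.
  apply: le_fill => // i.
  - by move=> _; exact: natSinv_in01.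
  - by move=> _; exact: natSinv_in01.
  - by move=> _; rewrite /cst lef_pV2 ?posrE ?ltr0n // ler_nat.
apply: cvge_to_le (nondecreasing_cvg_mu mF (bigcupT_measurable _ mF) F_nd) _.
apply: nearW => k; apply: prob_fill_lt => //.
by rewrite invr_gt0 ltr0n; case/andP: (natSinv_in01 R k).
Qed.

Lemma g_inf_valid : valid_u Theta Theta0 Pr P u (g_inf u f).
Proof.
move=> theta null_theta alpha /andP[a0 _]; set E := [set w | _].
pose F m k := [set w | f (fill u (P^~ w) (cst k.+1%:R^-1)) < alpha + m.+1%:R^-1].
have E_cap : E = \bigcap_m \bigcup_k F m k.
  have cubeP w : in_cube u (P^~ w) by move=> i _; exact: P01.
  apply/seteqP; split => w.
    by move=> /(g_inf_le_natSinvP mf alpha (cubeP w)) h m _; have [k hk] := h m; exists k.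
  move=> h; apply/(g_inf_le_natSinvP mf alpha (cubeP w)) => m.
  by have [k _ hk] := h m I; exists k.
have mE : measurable E.
  rewrite E_cap; apply: bigcapT_measurable => m; apply: bigcupT_measurable => k.
  exact: measurable_fill_lt.
apply/lee_addgt0Pr => e e0; have [m me] := exists_natSinv_lt e0.
have mFm : measurable (\bigcup_k F m k).
  apply: bigcupT_measurable => k; exact: measurable_fill_lt.
have EF : E `<=` \bigcup_k F m k by rewrite E_cap; exact: bigcap_inf.
apply: le_trans (le_measure _ (mem_set mE) (mem_set mFm) EF) _.
apply: le_trans (prob_bigcup_fill_lt null_theta _) _.
  by rewrite addr_ge0 // invr_ge0.
by rewrite lee_fin lerD2l ltW.
Qed.

End validity.

Theorem lemma1 (R : realType) (n r : nat) (d : measure_display)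
  (Omega : measurableType d) (T : Type) (Theta Theta0 : 'I_n -> set T)
  (Pr : ('I_n -> T) -> probability Omega R) (P : 'I_n -> Omega -> R)
  (f : ('I_n -> R) -> R) (u : {set 'I_n}) :
  (1 <= r <= n)%N ->
  (forall i, measurable_fun setT (P i)) ->
  (forall i w, 0 <= P i w <= 1) ->
  (forall i, Theta0 i `<=` Theta i) ->
  marginals_consistent Theta Pr P ->
  components_valid Theta Theta0 Pr P ->
  lower_orthant_dependent Theta Pr P ->
  strong_alternatives Theta Theta0 Pr P ->
  borel_fun f ->
  valid_rn Theta Theta0 Pr P r f ->
  monotone_on_cube [set: 'I_n] f ->
  #|u| = (n - r).+1 ->
  valid_u Theta Theta0 Pr P u (g_inf u f) /\ monotone_on_cube u (g_inf u f).
Proof.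
move=> r_range mP P01 _ mc _ _ sa bf vf mf card_u.
split; first exact: (g_inf_valid r_range mP P01 mc sa bf vf mf card_u).
exact: g_inf_monotone mf.
Qed.
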